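(* Let $V$ be a finite-dimensional scalar product space and $T$ a self-adjoint operator on $V$. Let $\lambda$ be an eigenvalue of $T$, $U=T-\lambda I$, and suppose $x$ generates a cycle of generalized eigenvectors of length $p$ with eigenvalue $\lambda$ which is adapted to the scalar product with sign $\varepsilon$. Let $v_i=U^{p-i}x$ and $H=\operatorname{span}\{v_1,\dots,v_p\}$. For $0\le k\le p-1$ define the symmetric bilinear form $[y,w]_k=\langle U^k y,w\rangle$ on $H$. Then the number of zero entries in any diagonal representation of $[\cdot,\cdot]_k$ is $k$. If $\lambda\in\mathbb{R}$, then the number of negative entries in any diagonal representation of $[\cdot,\cdot]_k$ is $$\begin{cases}\lfloor\frac{(p-k)+1}{2}\rfloor&\text{if }\varepsilon=-1,\\ (p-k)-\lfloor\frac{(p-k)+1}{2}\rfloor&\text{if }\varepsilon=1.\end{cases}$$ In particular, the invariants of $[\cdot,\cdot]_k$ depend only on $p,k,\varepsilon$.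
   Context: A scalar product is a non-degenerate symmetric bilinear form $\langle\cdot,\cdot\rangle$ over $\mathbb{R}$ or $\mathbb{C}$ (bilinear in the complex case); if $V$ is real, non-real eigenvalues are handled in the complexification with the bilinear extension, while for real $\lambda$ the cycle lies in the real space $V$. $T$ is self-adjoint if $\langle Tx,y\rangle=\langle x,Ty\rangle$. $x$ generates a cycle of length $p$ if $p$ is minimal with $U^px=0$. The cycle is adapted to the scalar product with sign $\varepsilon$ if $v_1,\dots,v_p$ satisfy $\langle v_i,v_j\rangle=\varepsilon$ for $i+j=p+1$ and $0$ otherwise, where $\varepsilon\in\{\pm1\}$ if $\lambda\in\mathbb{R}$ and $\varepsilon=1$ if $\lambda\notin\mathbb{R}$. A diagonal representation of a symmetric bilinear form is a basis in which its matrix is diagonal. *)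

(* Vectors are ROW vectors 'rV[F]_n (MathComp convention:
   a matrix A acts by x |-> x *m A), the scalar product is given by its
   Gram matrix G : <x, y> = x *m G *m y^T. *)
From HB Require Import structures.
From mathcomp Require Import all_boot all_order all_algebra.
From mathcomp Require Import reals complex.
Set Implicit Arguments. Unset Strict Implicit. Unset Printing Implicit Defensive.
Import Order.TTheory GRing.Theory Num.Theory.
Local Open Scope ring_scope.

Section Defs.
Variables (F : fieldType) (n : nat).
Implicit Types (G A : 'M[F]_n) (x y w : 'rV[F]_n).

Definition bform G x y : F := (x *m G *m y^T) 0 0.

Definition scalar_product G : Prop := G^T = G /\ G \in unitmx.

Definition self_adjoint G A : Prop :=
  forall x y, bform G (x *m A) y = bform G x (y *m A).

Definition is_eigenvalue A (lam : F) : Prop :=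
  exists2 v : 'rV[F]_n, v != 0 & v *m A = lam *: v.

Definition Uop A (lam : F) : 'M[F]_n := A - lam%:M.

Definition gen_cycle A lam x (p : nat) : Prop :=
  x *m (Uop A lam) ^+ p = 0 /\
  forall q, (q < p)%N -> x *m (Uop A lam) ^+ q != 0.

(* v_i = U^(p-i) x, for i = 1..p ; indexed by j : 'I_p with i = j+1 *)
Definition cyc_vec A lam x p (j : 'I_p) : 'rV[F]_n :=
  x *m (Uop A lam) ^+ (p - j.+1).

Definition adapted G A lam x p (eps : F) : Prop :=
  (eps = 1 \/ eps = -1) /\
  forall i j : 'I_p, bform G (cyc_vec A lam x i) (cyc_vec A lam x j) =
     if (i.+1 + j.+1 == p.+1)%N then eps else 0.

(* matrix whose rows are v_1 .. v_p; its row space is H *)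
Definition Hmx A lam x p : 'M[F]_(p, n) := \matrix_(j < p) cyc_vec A lam x j.

Definition kform G A lam (k : nat) y w : F := bform G (y *m (Uop A lam) ^+ k) w.

Definition diag_rep G A lam x p k m (B : 'M[F]_(m, n)) : Prop :=
  row_free B /\ (B == Hmx A lam x p)%MS /\
  forall i j : 'I_m, i != j -> kform G A lam k (row i B) (row j B) = 0.

Definition nzeros G A lam k m (B : 'M[F]_(m, n)) : nat :=
  #|[set i : 'I_m | kform G A lam k (row i B) (row i B) == 0]|.

End Defs.

Definition nnegs (R : realFieldType) n (G A : 'M[R]_n) lam k m (B : 'M[R]_(m, n))
  : nat :=
  #|[set i : 'I_m | kform G A lam k (row i B) (row i B) < 0]|.

(* In the basis v_1, ..., v_p of H the Gram matrix of [.,.]_k has the entry eps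
   at (i, j) when i > k and i + j = p + k + 1, and 0 elsewhere: it is eps times a
   reflection of the last p - k coordinates, so it has rank p - k, which gives the
   k zeros.  In coordinates w the form reads eps * sum_(i > k) w_i w_(r i), r the
   reflection; on vectors with w_(r i) = s w_i it equals eps s sum_(i > k) w_i^2.
   Imposing these symmetries (and w_i = 0 for i <= k) cuts out subspaces of H of
   explicit dimension on which the form is positive semidefinite (s = eps) or
   negative definite (s = -eps).  Comparing them with the nonnegative and negative
   parts of a diagonal representation (the argument behind Sylvester's law of
   inertia) pins down the number of negative entries. *)

From HB Require Import structures.
From mathcomp Require Import all_boot all_order all_algebra.
From mathcomp Require Import reals complex.
From mathcomp Require Import perm zify ring lra.
Import Order.TTheory GRing.Theory Num.Theory.
Set Implicit Arguments. Unset Strict Implicit. Unset Printing Implicit Defensive.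
Local Open Scope ring_scope.

Section BilinearForms.
Variable F : fieldType.

Lemma bform_mxE n (M : 'M[F]_n) (v w : 'rV_n) :
  bform M v w = \sum_i \sum_j v 0 i * M i j * w 0 j.
Proof.
rewrite /bform mxE exchange_big /=; apply: eq_bigr => j _.
by rewrite mxE mulr_suml; apply: eq_bigr => i _; rewrite mxE.
Qed.

Lemma bform_mulmx n m (M : 'M[F]_n) (X : 'M_(m, n)) (v w : 'rV_m) :
  bform M (v *m X) (w *m X) = bform (X *m M *m X^T) v w.
Proof. by rewrite /bform trmx_mul !mulmxA. Qed.

Lemma bform_diag_mx m (d v w : 'rV[F]_m) :
  bform (diag_mx d) v w = \sum_i v 0 i * d 0 i * w 0 i.
Proof.
by rewrite /bform mxE; apply: eq_bigr => i _; rewrite mul_mx_diag !mxE.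
Qed.

Lemma gram_mxE n m1 m2 (M : 'M[F]_n) (X : 'M_(m1, n)) (Y : 'M_(m2, n)) i j :
  (X *m M *m Y^T) i j = bform M (row i X) (row j Y).
Proof.
rewrite /bform !mxE; apply: eq_bigr => l _; rewrite !mxE; congr (_ * _).
by apply: eq_bigr => r _; rewrite !mxE.
Qed.

Lemma gram_mx_diag n m (M : 'M[F]_n) (B : 'M_(m, n)) :
  (forall i j, i != j -> bform M (row i B) (row j B) = 0) ->
  B *m M *m B^T = diag_mx (\row_i bform M (row i B) (row i B)).
Proof.
move=> offdiag; apply/matrixP => i j; rewrite gram_mxE !mxE.
by case: eqVneq => [<-|/offdiag->]; rewrite ?mulr1n ?mulr0n.
Qed.

Lemma mxrank_gram_le n m1 m2 (M : 'M[F]_n) (B : 'M_(m1, n)) (H : 'M_(m2, n)) :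
  (B <= H)%MS -> (\rank (B *m M *m B^T) <= \rank (H *m M *m H^T))%N.
Proof.
case/submxP => X ->.
have -> : X *m H *m M *m (X *m H)^T = X *m (H *m M *m H^T) *m X^T.
  by rewrite trmx_mul !mulmxA.
exact: leq_trans (mxrankM_maxl _ _) (mxrankM_maxr _ _).
Qed.

Lemma rank_diag_mx m (d : 'rV[F]_m) : \rank (diag_mx d) = #|[pred i | d 0 i != 0]|.
Proof.
set P := [pred i | d 0 i != 0].
pose f : 'I_#|P| -> 'I_m := enum_val.
have dP a : d 0 (f a) != 0 by have := enum_valP a.
have sub_rows : (diag_mx d <= rowsub f (diag_mx d))%MS.
  apply/row_subP => i; rewrite row_diag_mx.
  have [Pi|/negPn/eqP->] := boolP (i \in P); last by rewrite scale0r sub0mx.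
  by rewrite -row_diag_mx -(enum_rankK_in Pi Pi) -row_rowsub row_sub.
have free : row_free (rowsub f (diag_mx d)).
  apply: inj_row_free => v /rowP vS0; apply/rowP => a.
  move: (vS0 (f a)); rewrite !mxE (bigD1 a) //= big1 => [|b nba]; last first.
    by rewrite !mxE (inj_eq enum_val_inj) (negbTE nba) mulr0n mulr0.
  rewrite !mxE eqxx mulr1n addr0 => /eqP.
  by rewrite mulf_eq0 (negbTE (dP a)) orbF => /eqP.
have /eqmx_rank-> : (diag_mx d == rowsub f (diag_mx d))%MS by rewrite sub_rows rowsub_sub.
by apply/eqP.
Qed.

Definition mask_mx m (P : pred 'I_m) : 'M[F]_m := diag_mx (\row_i (P i)%:R).

Lemma rank_mask_mxM m n (P : pred 'I_m) (X : 'M[F]_(m, n)) :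
  row_free X -> \rank (mask_mx P *m X) = #|P|.
Proof.
move=> freeX; rewrite mxrankMfree // rank_diag_mx; apply: eq_card => i.
by rewrite !inE mxE unfold_in; case: (P i); rewrite ?oner_neq0 ?eqxx.
Qed.

End BilinearForms.
Arguments mask_mx {F m} P.

Section Inertia.
Variables (R : realFieldType) (n : nat) (M : 'M[R]_n).

Definition negdef_on m (W : 'M_(m, n)) :=
  forall u : 'rV_n, (u <= W)%MS -> u != 0 -> bform M u u < 0.

Definition psd_on m (W : 'M_(m, n)) :=
  forall u : 'rV_n, (u <= W)%MS -> 0 <= bform M u u.

Lemma mxrank_negdef_psd_le m1 m2 h (W1 : 'M_(m1, n)) (W2 : 'M_(m2, n)) (H : 'M_(h, n)) :
  (W1 <= H)%MS -> (W2 <= H)%MS -> negdef_on W1 -> psd_on W2 ->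
  (\rank W1 + \rank W2 <= \rank H)%N.
Proof.
move=> sW1H sW2H neg1 psd2; rewrite -mxrank_disjoint_sum.
  by apply: mxrankS; rewrite addsmx_sub sW1H sW2H.
apply/eqP; rewrite -submx0; apply/row_subP => i; set u := row i _.
have [->|nz_u] := eqVneq u 0; first by rewrite sub0mx.
have u1 : (u <= W1)%MS by rewrite (submx_trans (row_sub _ _)) ?capmxSl.
have u2 : (u <= W2)%MS by rewrite (submx_trans (row_sub _ _)) ?capmxSr.
by have := neg1 _ u1 nz_u; have := psd2 _ u2; lra.
Qed.

Variables (m : nat) (B : 'M[R]_(m, n)) (d : 'rV[R]_m).
Local Notation negs := [pred i : 'I_m | d 0 i < 0].
Local Notation nonnegs := [pred i : 'I_m | 0 <= d 0 i].

Lemma card_neg_nonneg : (#|negs| + #|nonnegs|)%N = m.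
Proof.
rewrite -[m in RHS]card_ord -(cardC negs).
by congr addn; apply: eq_card => i; rewrite !inE leNgt.
Qed.

Lemma sub_mask_coords (P : pred 'I_m) (u : 'rV_n) :
  (u <= mask_mx P *m B)%MS ->
  exists2 c : 'rV_m, u = c *m B & forall j, ~~ P j -> c 0 j = 0.
Proof.
case/submxP => c0 ->; exists (c0 *m mask_mx P); first by rewrite mulmxA.
by move=> j /negbTE Pj; rewrite mul_mx_diag !mxE Pj mulr0.
Qed.

Hypothesis diagB : B *m M *m B^T = diag_mx d.

Lemma bform_diag_coords (c : 'rV_m) :
  bform M (c *m B) (c *m B) = \sum_j c 0 j ^+ 2 * d 0 j.
Proof.
rewrite bform_mulmx diagB bform_diag_mx; apply: eq_bigr => j _; ring.
Qed.

Lemma negdef_neg_part : negdef_on (mask_mx negs *m B).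
Proof.
move=> u /sub_mask_coords[c -> c_neg] nz_u.
have /rV0Pn[j nz_cj] : c != 0 by apply: contraNneq nz_u => ->; rewrite mul0mx.
have dj : d 0 j < 0 by apply: contraNT nz_cj => /c_neg->.
rewrite bform_diag_coords (bigD1 j) //=.
have term_j : c 0 j ^+ 2 * d 0 j < 0 by rewrite pmulr_rlt0 // exprn_even_gt0.
have rest : \sum_(i | i != j) c 0 i ^+ 2 * d 0 i <= 0.
  apply: sumr_le0 => i _; have [di|di] := ltP (d 0 i) 0.
    by rewrite mulr_ge0_le0 ?sqr_ge0 ?ltW.
  by rewrite c_neg ?expr0n ?mul0r //= -leNgt.
lra.
Qed.

Lemma psd_nonneg_part : psd_on (mask_mx nonnegs *m B).
Proof.
move=> u /sub_mask_coords[c -> c_nonneg]; rewrite bform_diag_coords.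
apply: sumr_ge0 => i _; have [di|di] := leP 0 (d 0 i).
  by rewrite mulr_ge0 ?sqr_ge0.
by rewrite c_nonneg ?expr0n ?mul0r //= -ltNge.
Qed.

Hypothesis freeB : row_free B.

Lemma negdef_rank_le h (W : 'M_(h, n)) :
  (W <= B)%MS -> negdef_on W -> (\rank W <= #|negs|)%N.
Proof.
move=> sWB negW; have := mxrank_negdef_psd_le sWB (submxMl _ _) negW psd_nonneg_part.
rewrite rank_mask_mxM // (eqP freeB) => le_m.
by rewrite -(leq_add2r #|nonnegs|) card_neg_nonneg.
Qed.

Lemma psd_rank_le h (W : 'M_(h, n)) :
  (W <= B)%MS -> psd_on W -> (\rank W <= #|nonnegs|)%N.
Proof.
move=> sWB psdW; have := mxrank_negdef_psd_le (submxMl _ _) sWB negdef_neg_part psdW.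
rewrite rank_mask_mxM // (eqP freeB) => le_m.
by rewrite -(leq_add2l #|negs|) card_neg_nonneg.
Qed.

End Inertia.

Section TailReflection.
Variables (p k : nat).

Lemma tail_reflect_subproof (i : 'I_p) :
  ((if (k <= i)%N then p.-1 + k - i else i) < p)%N.
Proof. by have := ltn_ord i; case: ifP; lia. Qed.

Definition tail_reflect (i : 'I_p) : 'I_p := Ordinal (tail_reflect_subproof i).

Lemma tail_reflectE (i : 'I_p) :
  tail_reflect i = (if (k <= i)%N then p.-1 + k - i else i)%N :> nat.
Proof. by []. Qed.

Lemma tail_reflect_ge (i : 'I_p) : (k <= i)%N -> (k <= tail_reflect i)%N.
Proof. by rewrite tail_reflectE => ki; rewrite ki; have := ltn_ord i; lia. Qed.

Lemma tail_reflectK : involutive tail_reflect.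
Proof.
move=> i; apply: ord_inj; rewrite !tail_reflectE.
by have := ltn_ord i; case: (leqP k i) => ki; case: ifP; lia.
Qed.

Lemma card_tail : #|[pred i : 'I_p | (k <= i)%N]| = (p - k)%N.
Proof.
rewrite -sum1_card -[(p - k)%N]muln1 -sum_nat_const_nat big_geq_mkord.
by apply: eq_bigl => i; rewrite /= inE.
Qed.

End TailReflection.

Section CoordinateForms.
Variable F : fieldType.

Definition cycle_gram p k (eps : F) : 'M[F]_p :=
  \matrix_(i, j) if (k <= i)%N && (tail_reflect k i == j) then eps else 0.

Lemma cycle_gram_factor p k (eps : F) :
  cycle_gram p k eps =
  diag_mx (\row_i ((k <= i)%N%:R * eps)) *m perm_mx (perm (inv_inj (@tail_reflectK p k))).
Proof.
apply/matrixP => i j; rewrite mul_diag_mx !mxE permE.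
by case: (k <= i)%N; case: (_ == j); rewrite ?mul1r ?mulr1 ?mul0r ?mulr0.
Qed.

Lemma rank_cycle_gram p k (eps : F) :
  eps != 0 -> \rank (cycle_gram p k eps) = (p - k)%N.
Proof.
move=> eps_nz; rewrite cycle_gram_factor mxrankMfree ?row_free_unit ?unitmx_perm //.
rewrite rank_diag_mx -card_tail; apply: eq_card => i; rewrite !inE mxE.
by case: (k <= i)%N; rewrite ?mul1r ?mul0r ?eqxx.
Qed.

Lemma bform_cycle_gram p k (eps : F) (w : 'rV_p) :
  bform (cycle_gram p k eps) w w =
  eps * \sum_(i < p | (k <= i)%N) w 0 i * w 0 (tail_reflect k i).
Proof.
rewrite bform_mxE mulr_sumr [RHS]big_mkcond; apply: eq_bigr => i _.
rewrite (bigD1 (tail_reflect k i)) //= big1 => [|j /negbTE nj]; last first.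
  by rewrite mxE eq_sym nj andbF mulr0 mul0r.
by rewrite mxE eqxx andbT addr0; case: (k <= i)%N; rewrite ?mulr0 ?mul0r //; ring.
Qed.

Lemma bform_cycle_gram_sym p k (eps s : F) (w : 'rV_p) :
  (forall i : 'I_p, (k <= i)%N -> w 0 (tail_reflect k i) = s * w 0 i) ->
  bform (cycle_gram p k eps) w w = eps * s * \sum_(i < p | (k <= i)%N) w 0 i ^+ 2.
Proof.
move=> sym; rewrite bform_cycle_gram -mulrA; congr (_ * _); rewrite mulr_sumr.
by apply: eq_bigr => i /sym->; ring.
Qed.

Definition constraint_mx p c (g : 'I_c -> 'I_p) (h : 'I_p -> 'I_p) (a : 'I_p -> F)
  : 'M[F]_(p, c) := \matrix_(i, j) ((g j == i)%:R - a (g j) * (h (g j) == i)%:R).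

Lemma sum_mulr_delta p (v : 'I_p -> F) i0 : \sum_i v i * (i0 == i)%:R = v i0.
Proof.
rewrite (bigD1 i0) //= big1 => [|i /negbTE ni]; first by rewrite eqxx mulr1 addr0.
by rewrite eq_sym ni mulr0.
Qed.

Lemma constraint_mxP p c (g : 'I_c -> 'I_p) h a (w : 'rV_p) :
  w *m constraint_mx g h a = 0 -> forall j, w 0 (g j) = a (g j) * w 0 (h (g j)).
Proof.
move=> /rowP w0 j; move: (w0 j); rewrite !mxE.
under eq_bigr do rewrite !mxE mulrBr mulrCA.
by rewrite sumrB -mulr_sumr !sum_mulr_delta => /eqP; rewrite subr_eq0 => /eqP.
Qed.

Lemma tail_sym_kernel p k lo t (s : F) :
  s * s = 1 -> (lo <= k)%N -> (k + t <= p)%N ->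
  (p - k <= t.*2)%N \/ s = 1 /\ (p - k <= t.*2.+1)%N ->
  exists2 K : 'M[F]_p, (p - (k + t - lo) <= \rank K)%N &
    forall w : 'rV_p, (w <= K)%MS ->
      (forall i : 'I_p, (lo <= i < k)%N -> w 0 i = 0) /\
      (forall i : 'I_p, (k <= i)%N -> w 0 (tail_reflect k i) = s * w 0 i).
Proof.
(* The t constraints w_i = s w_(r i), i in [k, k + t), reach every reflected pair
   of the tail except a fixed point, which is harmless when s = 1. *)
move=> ss lo_k kt_p t_big.
have g_subproof (j : 'I_(k + t - lo)) : (lo + j < p)%N by have := ltn_ord j; lia.
pose g j := Ordinal (g_subproof j).
pose a (i : 'I_p) := if (i < k)%N then 0 else s.
exists (kermx (constraint_mx g (tail_reflect k) a)).
  by rewrite mxrank_ker leq_sub2l ?rank_leq_col.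
move=> w /sub_kermxP/constraint_mxP w_con.
have con (i : 'I_p) : (lo <= i < k + t)%N -> w 0 i = a i * w 0 (tail_reflect k i).
  move=> /andP[lo_i i_kt]; have j_lt : (i - lo < k + t - lo)%N by lia.
  have /ord_inj gi : g (Ordinal j_lt) = i :> nat by rewrite /= subnKC.
  by rewrite -gi w_con.
split=> [i /andP[lo_i i_k] | i k_i].
  by rewrite con ?lo_i ?(leq_trans i_k) ?leq_addr // /a i_k mul0r.
have [i_kt|kt_i] := ltnP i (k + t).
  by rewrite [in RHS]con ?i_kt ?(leq_trans lo_k) //= /a ltnNge k_i mulrA ss mul1r.
have [ri_kt|kt_ri] := ltnP (tail_reflect k i) (k + t).
  rewrite [LHS]con ?ri_kt ?(leq_trans lo_k) ?tail_reflect_ge // tail_reflectK.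
  by rewrite /a /= ltnNge tail_reflect_ge.
move: kt_ri; rewrite tail_reflectE k_i; have := ltn_ord i => i_p kt_ri.
case: t_big => [|[-> t_odd]]; first lia.
suff /ord_inj-> : tail_reflect k i = i :> nat by rewrite mul1r.
rewrite tail_reflectE k_i; lia.
Qed.

End CoordinateForms.

Section AdaptedCycle.
Variables (F : fieldType) (n : nat) (G A : 'M[F]_n) (lam : F) (x : 'rV[F]_n).
Variables (p : nat) (eps : F).
Hypotheses (cycle : gen_cycle A lam x p) (adapt : adapted G A lam x p eps).
Local Notation U := (Uop A lam).
Local Notation H := (Hmx A lam x p).

Lemma adapted_sign_sqr : eps * eps = 1.
Proof. by case: adapt.1 => ->; rewrite ?mulrNN mulr1. Qed.

Lemma adapted_sign_neq0 : eps != 0.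
Proof.
by apply: contra_eq_neq adapted_sign_sqr => ->; rewrite mulr0 eq_sym oner_neq0.
Qed.

Lemma kformE k (y w : 'rV_n) : kform G A lam k y w = bform (U ^+ k *m G) y w.
Proof. by rewrite /kform /bform mulmxA. Qed.

Lemma Hmx_gram k : H *m (U ^+ k *m G) *m H^T = cycle_gram p k eps.
Proof.
apply/matrixP => i j; rewrite gram_mxE !rowK -kformE /kform /cyc_vec.
rewrite -mulmxA mulmxE -exprD.
have i_p := ltn_ord i; rewrite mxE.
have [k_i|i_k] := leqP k i; last first.
  rewrite (_ : (p - i.+1 + k = p + (p - i.+1 + k - p))%N); last by lia.
  by rewrite exprD mulmxA cycle.1 mul0mx /bform !mul0mx mxE.
have ik_p : (i - k < p)%N by lia.
rewrite (_ : (p - i.+1 + k = p - (Ordinal ik_p).+1)%N); last by rewrite /=; lia.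
rewrite -/(cyc_vec A lam x (Ordinal ik_p)) adapt.2 /=.
suff -> : ((i - k).+1 + j.+1 == p.+1)%N = (tail_reflect k i == j) by [].
apply/eqP/eqP => [h|<-]; first apply: ord_inj; rewrite tail_reflectE k_i; lia.
Qed.

Lemma bform_Hmx k (w : 'rV_p) :
  bform (U ^+ k *m G) (w *m H) (w *m H) = bform (cycle_gram p k eps) w w.
Proof. by rewrite bform_mulmx Hmx_gram. Qed.

Lemma row_free_Hmx : row_free H.
Proof.
rewrite -row_leq_rank -{1}(subn0 p).
rewrite -(@rank_cycle_gram _ p 0 _ adapted_sign_neq0) -(Hmx_gram 0).
exact: leq_trans (mxrankM_maxl _ _) (mxrankM_maxl _ _).
Qed.

Section DiagonalRepresentation.
Variables (k m : nat) (B : 'M[F]_(m, n)).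
Hypothesis rep : diag_rep G A lam x p k B.

Lemma diag_rep_size : m = p.
Proof.
case: rep => freeB [eqBH _].
by rewrite -(eqP freeB) -(eqP row_free_Hmx); apply: eqmx_rank.
Qed.

Lemma diag_rep_gram :
  B *m (U ^+ k *m G) *m B^T = diag_mx (\row_i kform G A lam k (row i B) (row i B)).
Proof.
under eq_mx do rewrite kformE.
by apply: gram_mx_diag => i j /rep.2.2; rewrite kformE.
Qed.

Lemma nzeros_diag_rep : (k <= p)%N -> nzeros G A lam k B = k.
Proof.
move=> k_p; have rank_diag : \rank (B *m (U ^+ k *m G) *m B^T) = (p - k)%N.
  rewrite -(rank_cycle_gram _ _ adapted_sign_neq0) -Hmx_gram.
  case/andP: rep.2.1 => sBH sHB; apply/eqP.
  by rewrite eqn_leq !mxrank_gram_le.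
rewrite diag_rep_gram rank_diag_mx in rank_diag.
set Z := [pred i : 'I_m | kform G A lam k (row i B) (row i B) == 0].
have card_nonzero : #|[predC Z]| = (p - k)%N.
  by rewrite -rank_diag; apply: eq_card => i; rewrite !inE mxE.
have := cardC Z; rewrite card_ord card_nonzero /nzeros cardsE.
by move: #|_| => z; have := diag_rep_size; lia.
Qed.

End DiagonalRepresentation.
End AdaptedCycle.

Section AdaptedCycleInertia.
Variables (R : realFieldType) (n : nat) (G A : 'M[R]_n) (lam : R) (x : 'rV[R]_n).
Variables (p : nat) (eps : R).
Hypotheses (cycle : gen_cycle A lam x p) (adapt : adapted G A lam x p eps).
Local Notation U := (Uop A lam).
Local Notation H := (Hmx A lam x p).

Lemma psd_cycle_subspace k t :
  (k + t <= p)%N -> (p - k <= t.*2)%N \/ eps = 1 /\ (p - k <= t.*2.+1)%N ->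
  exists2 W : 'M_(p, n), (W <= H)%MS & (p - t <= \rank W)%N /\ psd_on (U ^+ k *m G) W.
Proof.
move=> kt_p t_big.
have [K rankK Ksym] := tail_sym_kernel (adapted_sign_sqr adapt) (leqnn k) kt_p t_big.
exists (K *m H); first exact: submxMl.
split; first by rewrite mxrankMfree ?(row_free_Hmx cycle adapt) // -(addKn k t).
move=> u /submxP[c ->]; rewrite mulmxA (bform_Hmx cycle adapt).
rewrite (bform_cycle_gram_sym _ (Ksym _ (submxMl _ _)).2) (adapted_sign_sqr adapt) mul1r.
by apply: sumr_ge0 => i _; apply: sqr_ge0.
Qed.

Lemma negdef_cycle_subspace k t :
  (k + t <= p)%N -> (p - k <= t.*2)%N \/ eps = -1 /\ (p - k <= t.*2.+1)%N ->
  exists2 W : 'M_(p, n), (W <= H)%MS &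
    (p - (k + t) <= \rank W)%N /\ negdef_on (U ^+ k *m G) W.
Proof.
move=> kt_p t_big.
have ss : (- eps) * (- eps) = 1 by rewrite mulrNN (adapted_sign_sqr adapt).
have t_big' : (p - k <= t.*2)%N \/ - eps = 1 /\ (p - k <= t.*2.+1)%N.
  by case: t_big => [|[-> ?]]; [left | right; rewrite opprK].
have [K rankK Ksol] := tail_sym_kernel ss (leq0n k) kt_p t_big'.
exists (K *m H); first exact: submxMl.
split; first by rewrite mxrankMfree ?(row_free_Hmx cycle adapt) // -[(k + t)%N]subn0.
move=> u /submxP[c ->]; rewrite mulmxA (bform_Hmx cycle adapt).
have := Ksol _ (submxMl c K); move: (c *m K) => w [w_head w_sym].
rewrite (bform_cycle_gram_sym _ w_sym) mulrN (adapted_sign_sqr adapt) mulN1r oppr_lt0.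
move=> nz_wH.
have /rV0Pn[j nz_wj] : w != 0 by apply: contraNneq nz_wH => ->; rewrite mul0mx.
have k_j : (k <= j)%N by rewrite leqNgt; apply: contraNN nz_wj => j_k; rewrite w_head.
rewrite (bigD1 j) //=; have : 0 < w 0 j ^+ 2 by rewrite exprn_even_gt0.
have : 0 <= \sum_(i < p | (k <= i)%N && (i != j)) w 0 i ^+ 2.
  by apply: sumr_ge0 => i _; apply: sqr_ge0.
lra.
Qed.

Lemma nnegs_diag_rep k m (B : 'M_(m, n)) :
  diag_rep G A lam x p k B -> (k <= p)%N ->
  nnegs G A lam k B =
    (if eps == -1 then ((p - k).+1)./2%N else ((p - k) - ((p - k).+1)./2)%N).
Proof.
move=> rep k_p; have diagB := diag_rep_gram rep.
have [freeB [/andP[_ sHB] _]] := rep.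
set d := \row_i _ in diagB.
have card_negs : nnegs G A lam k B = #|[pred i | d 0 i < 0]|.
  by rewrite /nnegs cardsE; apply: eq_card => i; rewrite !inE mxE.
have negdef_le h (W : 'M_(h, n)) : (W <= H)%MS -> negdef_on (U ^+ k *m G) W ->
    (\rank W <= nnegs G A lam k B)%N.
  move=> sWH; rewrite card_negs.
  by apply: (negdef_rank_le diagB freeB); apply: submx_trans sWH sHB.
have psd_le h (W : 'M_(h, n)) : (W <= H)%MS -> psd_on (U ^+ k *m G) W ->
    (\rank W + nnegs G A lam k B <= p)%N.
  move=> sWH /(psd_rank_le diagB freeB (submx_trans sWH sHB)).
  have := card_neg_nonneg d; rewrite card_negs -(diag_rep_size cycle adapt rep).
  by move: #|[pred i | d 0 i < 0]| #|[pred i | 0 <= d 0 i]| => a b; lia.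
have one_neq : ((1 : R) == -1) = false by apply/eqP; lra.
have half_le : (k + (p - k)./2 <= p)%N by lia.
have uphalf_le : (k + (p - k).+1./2 <= p)%N by lia.
have half_cover : (p - k <= ((p - k)./2).*2.+1)%N by lia.
have uphalf_cover : (p - k <= ((p - k).+1./2).*2)%N by lia.
case: adapt.1 => eps_val; rewrite eps_val ?one_neq ?eqxx.
- have [W1 sW1 [rank1 /(psd_le _ _ sW1) le1]] :=
    psd_cycle_subspace half_le (or_intror (conj eps_val half_cover)).
  have [W2 sW2 [rank2 /(negdef_le _ _ sW2) le2]] :=
    negdef_cycle_subspace uphalf_le (or_introl uphalf_cover).
  lia.
- have [W1 sW1 [rank1 /(psd_le _ _ sW1) le1]] :=
    psd_cycle_subspace uphalf_le (or_introl uphalf_cover).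
  have [W2 sW2 [rank2 /(negdef_le _ _ sW2) le2]] :=
    negdef_cycle_subspace half_le (or_intror (conj eps_val half_cover)).
  lia.
Qed.

End AdaptedCycleInertia.

Local Open Scope complex_scope.

Theorem mainTheorem7 (R : realType) :
  (forall (n : nat) (G A : 'M[R]_n) (lam : R) (x : 'rV[R]_n) (p : nat)
          (eps : R) (k m : nat) (B : 'M[R]_(m, n)),
     scalar_product G -> self_adjoint G A -> is_eigenvalue A lam ->
     gen_cycle A lam x p -> adapted G A lam x p eps ->
     (k < p)%N -> diag_rep G A lam x p k B ->
     nzeros G A lam k B = k /\
     nnegs G A lam k B =
       (if eps == -1 then ((p - k).+1)./2%N else ((p - k) - ((p - k).+1)./2)%N))
  /\
  (forall (n : nat) (G A : 'M[R[i]]_n) (lam : R[i]) (x : 'rV[R[i]]_n)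
          (p : nat) (eps : R[i]) (k m : nat) (B : 'M[R[i]]_(m, n)),
     scalar_product G -> self_adjoint G A -> is_eigenvalue A lam ->
     gen_cycle A lam x p -> adapted G A lam x p eps ->
     (lam \is Num.real \/ eps = 1) ->
     (k < p)%N -> diag_rep G A lam x p k B ->
     nzeros G A lam k B = k).
Proof.
split=> [n G A lam x p eps k m B _ _ _ cyc ad /ltnW k_p rep |
         n G A lam x p eps k m B _ _ _ cyc ad _ /ltnW k_p rep].
  split; first exact: (nzeros_diag_rep cyc ad rep k_p).
  exact: (nnegs_diag_rep cyc ad rep k_p).
exact: (nzeros_diag_rep cyc ad rep k_p).
Qed.
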